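(* Consider a many-sorted first-order vocabulary with sorts $U_a, U_b$ and binary relation symbols $R_a$ of type $U_a \times U_b$ and $R_b$ of type $U_b \times U_a$. Let $q(x) \equiv \exists y.\,[R_a(x,y) \wedge R_b(y,x)]$. Let $O[\cdot]$ be a definable unary propositional operator, i.e. a formula context built from atomic formulas and a hole $[\cdot]$, with $O[\phi]$ obtained by replacing every occurrence of the hole by $\phi$. Put $p(x) \equiv O[q(x)]$, and suppose $c$ is a constant of sort $U_a$ such that the sequents (A1) $R_a(c,y) \wedge R_b(y,x) \vdash_{\{x,y\}} p(x)$, (A2) $R_a(c,y) \wedge p(x) \vdash_{\{x,y\}} R_b(y,x)$, (A3) $\vdash \exists y.\, R_a(c,y)$ hold. Then $O[\cdot]$ has a fixpoint: there is a sentence $S$ (namely $S = q(c)$) such that $S \vdash O[S]$ and $O[S] \vdash S$ are derivable.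
   Context: A sequent $\phi \vdash_X \psi$, with $X$ a finite set of variables containing the free variables of $\phi,\psi$, means $\forall x_1\cdots\forall x_n[\phi \Rightarrow \psi]$ for $X=\{x_1,\dots,x_n\}$; $\vdash_X\psi$ abbreviates $\top\vdash_X\psi$ and $\phi\vdash\psi$ abbreviates $\phi\vdash_\varnothing\psi$. Variables $x$ have sort $U_a$, variables $y$ sort $U_b$. *)

From Stdlib Require Import List.
Import ListNotations.

Record structure := {
  Ua : Type;
  Ub : Type;
  Ra : Ua -> Ub -> Prop;
  Rb : Ub -> Ua -> Prop;
  c  : Ua
}.

(* Terms of sort U_a: de Bruijn variables of sort U_a, or the constant c.
   Terms of sort U_b: de Bruijn variables of sort U_b. *)
Inductive terma := TaVar (n : nat) | TaC.
Inductive termb := TbVar (n : nat).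

Inductive ctx :=
| CHole
| CRa (t : terma) (u : termb)
| CRb (u : termb) (t : terma)
| CEqa (t1 t2 : terma)
| CEqb (u1 u2 : termb)
| CTop
| CBot
| CAnd (A B : ctx)
| COr (A B : ctx)
| CImp (A B : ctx)
| CExa (A : ctx)
| CExb (A : ctx)
| CAlla (A : ctx)
| CAllb (A : ctx).

Definition evala (M : structure) (la : list (Ua M)) (t : terma) : option (Ua M) :=
  match t with TaVar n => nth_error la n | TaC => Some (c M) end.
Definition evalb (M : structure) (lb : list (Ub M)) (u : termb) : option (Ub M) :=
  match u with TbVar n => nth_error lb n end.

Definition wfa (na : nat) (t : terma) : Prop :=
  match t with TaVar n => n < na | TaC => True end.
Definition wfb (nb : nat) (u : termb) : Prop :=
  match u with TbVar n => n < nb end.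

Fixpoint wf (na nb : nat) (O : ctx) : Prop :=
  match O with
  | CHole | CTop | CBot => True
  | CRa t u => wfa na t /\ wfb nb u
  | CRb u t => wfb nb u /\ wfa na t
  | CEqa t1 t2 => wfa na t1 /\ wfa na t2
  | CEqb u1 u2 => wfb nb u1 /\ wfb nb u2
  | CAnd A B | COr A B | CImp A B => wf na nb A /\ wf na nb B
  | CExa A | CAlla A => wf (S na) nb A
  | CExb A | CAllb A => wf na (S nb) A
  end.

Definition closed_ctx (O : ctx) : Prop := wf 0 0 O.

(* Truth of O[φ] in M, where the hole is filled by a formula φ whose truth
   value (under the outer assignment) is h; φ's free variables are not
   captured by the binders of O (capture-avoiding substitution). *)
Fixpoint eval (M : structure) (la : list (Ua M)) (lb : list (Ub M))
         (h : Prop) (O : ctx) : Prop :=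
  match O with
  | CHole => h
  | CRa t u => match evala M la t, evalb M lb u with
               | Some a, Some b => Ra M a b | _, _ => False end
  | CRb u t => match evalb M lb u, evala M la t with
               | Some b, Some a => Rb M b a | _, _ => False end
  | CEqa t1 t2 => match evala M la t1, evala M la t2 with
                  | Some a1, Some a2 => a1 = a2 | _, _ => False end
  | CEqb u1 u2 => match evalb M lb u1, evalb M lb u2 with
                  | Some b1, Some b2 => b1 = b2 | _, _ => False end
  | CTop => True
  | CBot => False
  | CAnd A B => eval M la lb h A /\ eval M la lb h B
  | COr A B => eval M la lb h A \/ eval M la lb h B
  | CImp A B => eval M la lb h A -> eval M la lb h B
  | CExa A => exists a : Ua M, eval M (a :: la) lb h A
  | CExb A => exists b : Ub M, eval M la (b :: lb) h A
  | CAlla A => forall a : Ua M, eval M (a :: la) lb h A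
  | CAllb A => forall b : Ub M, eval M la (b :: lb) h A
  end.

Definition apply_ctx (M : structure) (O : ctx) (h : Prop) : Prop :=
  eval M [] [] h O.

Definition q (M : structure) (x : Ua M) : Prop :=
  exists y : Ub M, Ra M x y /\ Rb M y x.

Definition p (M : structure) (O : ctx) (x : Ua M) : Prop :=
  apply_ctx M O (q M x).


(* Nothing about the shape of O is needed: the sequents pin down p(x) as
   R_b(y,x) for any R_a-successor y of c, and A3 supplies such a y. *)

Lemma q_c_iff_p_c (M : structure) (P : Ua M -> Prop)
  (A1 : forall (x : Ua M) (y : Ub M), Ra M (c M) y /\ Rb M y x -> P x)
  (A2 : forall (x : Ua M) (y : Ub M), Ra M (c M) y /\ P x -> Rb M y x)
  (A3 : exists y : Ub M, Ra M (c M) y) :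
  q M (c M) <-> P (c M).
Proof.
  split.
  - intros [y Hy]. exact (A1 (c M) y Hy).
  - intros HP. destruct A3 as [y Hy].
    exists y. split; [exact Hy | exact (A2 (c M) y (conj Hy HP))].
Qed.

Theorem lemma4 (O : ctx) (HO : closed_ctx O) (M : structure)
  (A1 : forall (x : Ua M) (y : Ub M), Ra M (c M) y /\ Rb M y x -> p M O x)
  (A2 : forall (x : Ua M) (y : Ub M), Ra M (c M) y /\ p M O x -> Rb M y x)
  (A3 : exists y : Ub M, Ra M (c M) y) :
  (q M (c M) -> apply_ctx M O (q M (c M))) /\
  (apply_ctx M O (q M (c M)) -> q M (c M)).
Proof.
  exact (q_c_iff_p_c M (p M O) A1 A2 A3).
Qed.
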